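(* If $R\le c/\delta$, then for every $n\ge 1$ we have $B^d_n+1\le B^s_n$, and the pair $\phi_{n+1}(x)=(a^s_{n+1}(x),a^d_n(x))$ satisfies, for $x\ge 0$: $\phi_{n+1}(x)=(l,1)$ if $0\le x\le B^d_n$; $\phi_{n+1}(x)=(l,0)$ if $B^d_n<x\le B^s_n$; $\phi_{n+1}(x)=(h,0)$ if $x>B^s_n$.
   Context: Parameters: $\lambda>0$, $0<\mu_l<\mu_h$, $\delta=\mu_h-\mu_l$, $R\ge 0$, $c>0$, and $h:\{0,1,2,\dots\}\to\mathbb{R}$ nondecreasing and convex with $h(0)=0$; the rates are normalized so that $\lambda+\mu_h+\beta=1$ for a discount rate $\beta>0$. Finite-horizon value functions on $S=\{0,1,2,\dots\}\times\{0,1\}$: $v_0\equiv 0$ and for $n\ge 0$: $v_{n+1}(0,0)=\lambda v_n(0,1)+\mu_h v_n(0,0)$; $v_{n+1}(x,0)=-h(x)+\lambda v_n(x,1)+\mu_l v_n(x-1,0)+\max\{\delta v_n(x,0),-c+\delta v_n(x-1,0)\}$ for $x\ge1$; $v_{n+1}(x,1)=\max\{R+v_{n+1}(x+1,0),v_{n+1}(x,0)\}$ for $x\ge 0$. Define $\Delta_n(x,i)=v_n(x,i)-v_n(x+1,i)$. Optimal decisions: admission in state $(x,1)$ with $n\ge1$ steps remaining: $a^d_{n}(x)=1$ if $\Delta_{n}(x,0)\le R$, else $0$; service rate in state $(x,0)$ with $n+1$ steps remaining: $a^s_{n+1}(0)=l$, and for $x>0$, $a^s_{n+1}(x)=l$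 if $\Delta_n(x-1,0)\le c/\delta$, else $h$. Threshold function: $T_f(\theta)=\sup\{k\ge0: f(k)\le\theta\}$ with $\sup\emptyset=-1$ ($+\infty$ allowed). Thresholds: $B^s_n=1+T_{\Delta_n(\cdot,0)}(c/\delta)$ and $B^d_n=T_{\Delta_n(\cdot,0)}(R)$. *)

From Stdlib Require Import Reals ZArith.
Open Scope R_scope.

(* Parameters passed explicitly: lam, mul, muh, Rw (reward R), c, h.
   delta = muh - mul. *)

(* v0 lam mul muh Rw c h n x  =  v_n(x,0). *)
Fixpoint v0 (lam mul muh Rw c : R) (h : nat -> R) (n : nat) : nat -> R :=
  match n with
  | O => fun _ => 0
  | S m =>
      let w := v0 lam mul muh Rw c h m in
      let w1 := fun x : nat =>
        match m with
        | O => 0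
        | S _ => Rmax (Rw + w (S x)) (w x)
        end in
      fun x =>
        match x with
        | O => lam * w1 O + muh * w O
        | S x' => - h x + lam * w1 x + mul * w x'
                  + Rmax ((muh - mul) * w x) (- c + (muh - mul) * w x')
        end
  end.

(* v n (x,i), i = false for 0, true for 1. *)
Definition v (lam mul muh Rw c : R) (h : nat -> R) (n x : nat) (i : bool) : R :=
  if i then
    match n with
    | O => 0
    | S _ => Rmax (Rw + v0 lam mul muh Rw c h n (S x)) (v0 lam mul muh Rw c h n x)
    end
  else v0 lam mul muh Rw c h n x.

Definition Delta0 (lam mul muh Rw c : R) (h : nat -> R) (n x : nat) : R :=
  v lam mul muh Rw c h n x false - v lam mul muh Rw c h n (S x) false.

Inductive rate := low | high.

(* admission decision a^d_n(x): true = 1 (admit), false = 0 *)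
Definition adm (lam mul muh Rw c : R) (h : nat -> R) (n x : nat) : bool :=
  if Rle_dec (Delta0 lam mul muh Rw c h n x) Rw then true else false.

(* service decision a^s_{n+1}(x), given n *)
Definition serv (lam mul muh Rw c : R) (h : nat -> R) (n x : nat) : rate :=
  match x with
  | O => low
  | S x' => if Rle_dec (Delta0 lam mul muh Rw c h n x') (c / (muh - mul))
            then low else high
  end.

Inductive ext := Fin (z : Z) | PInf.

Definition ext_le (a b : ext) : Prop :=
  match a, b with
  | _, PInf => True
  | PInf, Fin _ => False
  | Fin x, Fin y => (x <= y)%Z
  end.

Definition ext_add1 (a : ext) : ext :=
  match a with Fin z => Fin (z + 1)%Z | PInf => PInf end.

Definition ext_of_nat (k : nat) : ext := Fin (Z.of_nat k).

(* is_threshold f th T : T = T_f(th) = sup {k >= 0 | f k <= th}, with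
   sup of the empty set = -1 and +infinity allowed; i.e. T is the least
   element of ext that is >= -1 and bounds every such k. *)
Definition is_threshold (f : nat -> R) (th : R) (T : ext) : Prop :=
  ext_le (Fin (-1)) T /\
  (forall k : nat, f k <= th -> ext_le (ext_of_nat k) T) /\
  (forall U : ext, ext_le (Fin (-1)) U ->
     (forall k : nat, f k <= th -> ext_le (ext_of_nat k) U) -> ext_le T U).

From Stdlib Require Import Reals ZArith Lra Lia.
Open Scope R_scope.

(* The proof rests on one structural fact: for every horizon n the map
   x |-> v_n(x,0) is nonincreasing and concave, so that
   Delta_n(.,0) is nondecreasing in x.  This is proved by induction on n:
   the class of nonincreasing concave sequences is closed under sums,
   nonnegative scalings, the admission operator w |-> max(R + w(x+1), w(x))
   and the service operator w |-> max(w(x), -c + w(x-1)), and v_{n+1}(.,0)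
   is built from v_n(.,0) and the nonincreasing concave cost -h by exactly
   these operations.

   For a nondecreasing f the threshold T_f(th) describes the sublevel set
   exactly: f(x) <= th iff x <= T_f(th); moreover T_f is monotone in th.
   Both decisions are sublevel tests of Delta_n(.,0) (at levels R and
   c/delta respectively, the service one shifted by one state), so the
   three regions of the theorem follow from R <= c/delta. *)

Definition decr_concave (f : nat -> R) : Prop :=
  forall x, 0 <= f x - f (S x) <= f (S x) - f (S (S x)).

Definition shift_down (u : nat -> R) (x : nat) : R :=
  match x with O => u O | S x' => u x' end.

Lemma decr_concave_ext (f g : nat -> R) :
  decr_concave f -> (forall x, f x = g x) -> decr_concave g.
Proof. intros Hf E x. rewrite <- !E. apply Hf. Qed.

Lemma decr_concave_plus (f g : nat -> R) :
  decr_concave f -> decr_concave g -> decr_concave (fun x => f x + g x).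
Proof. intros Hf Hg x. specialize (Hf x). specialize (Hg x). lra. Qed.

Lemma decr_concave_scal (a : R) (f : nat -> R) :
  0 <= a -> decr_concave f -> decr_concave (fun x => a * f x).
Proof.
  intros Ha Hf x. destruct (Hf x) as [H1 H2].
  rewrite <- !Rmult_minus_distr_l.
  split; [apply Rmult_le_pos | apply Rmult_le_compat_l]; lra.
Qed.

Lemma decr_concave_const (r : R) : decr_concave (fun _ => r).
Proof. intro x. lra. Qed.

Lemma decr_concave_shift_down (u : nat -> R) :
  decr_concave u -> decr_concave (shift_down u).
Proof.
  intros Hu [|x]; simpl.
  - destruct (Hu 0%nat). lra.
  - apply Hu.
Qed.

Ltac destruct_Rmax :=
  repeat match goal with
  | |- context [Rmax ?a ?b] =>
      let H := fresh in
      destruct (Rle_dec a b) as [H|H];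
      [ rewrite (Rmax_right a b H)
      | rewrite (Rmax_left a b (Rlt_le _ _ (Rnot_le_lt _ _ H))) ]
  end.

Lemma decr_concave_admission (r : R) (u : nat -> R) :
  decr_concave u -> decr_concave (fun x => Rmax (r + u (S x)) (u x)).
Proof.
  intros Hu x. destruct (Hu x), (Hu (S x)), (Hu (S (S x))).
  destruct_Rmax; lra.
Qed.

Lemma decr_concave_service (c : R) (u : nat -> R) :
  decr_concave u -> decr_concave (fun x => Rmax (u x) (- c + shift_down u x)).
Proof.
  intros Hu x. pose proof (decr_concave_shift_down u Hu x) as W. simpl in W |- *.
  destruct (Hu x), (Hu (S x)). destruct_Rmax; lra.
Qed.

Section ValueFunctions.

Variables (lam mul muh Rw c : R) (h : nat -> R).
Hypotheses (Hlam : 0 < lam) (Hmul : 0 < mul) (Hmulh : mul < muh) (Hc : 0 < c).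
Hypotheses (Hh0 : h O = 0)
  (Hhmono : forall x : nat, h x <= h (S x))
  (Hhconv : forall x : nat, h (S x) - h x <= h (S (S x)) - h (S x)).

Let V := v0 lam mul muh Rw c h.

(* v_n(.,1) as it enters the recursion for v_{n+1}(.,0). *)
Let admitted (m : nat) (x : nat) : R :=
  match m with O => 0 | S _ => Rmax (Rw + V m (S x)) (V m x) end.

(* One step of the recursion written uniformly in x, using the convention
   v(-1,0) := v(0,0), under which the service term at x = 0 is inert. *)
Lemma v0_step (m x : nat) :
  V (S m) x = - h x + lam * admitted m x + mul * shift_down (V m) x
              + Rmax ((muh - mul) * V m x) (- c + (muh - mul) * shift_down (V m) x).
Proof.
  destruct x as [|x]; unfold admitted, V; simpl.
  - rewrite Hh0, (Rmax_left ((muh - mul) * _)) by lra. destruct m; ring.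
  - destruct m; reflexivity.
Qed.

Lemma decr_concave_neg_cost : decr_concave (fun x => - h x).
Proof.
  intro x. pose proof (Hhmono x). pose proof (Hhmono (S x)).
  pose proof (Hhconv x). lra.
Qed.

Lemma decr_concave_v0 (n : nat) : decr_concave (V n).
Proof.
  induction n as [|m IH].
  - apply decr_concave_const.
  - assert (Hadm : decr_concave (admitted m)).
    { unfold admitted; destruct m.
      - apply decr_concave_const.
      - apply decr_concave_admission, IH. }
    assert (Hserv : decr_concave (fun x => Rmax ((muh - mul) * V m x)
                       (- c + (muh - mul) * shift_down (V m) x))).
    { apply decr_concave_ext with
        (fun x => Rmax ((fun y => (muh - mul) * V m y) x)
                       (- c + shift_down (fun y => (muh - mul) * V m y) x)).
      - apply decr_concave_service, decr_concave_scal; [lra | exact IH].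
      - intros [|x]; reflexivity. }
    apply decr_concave_ext with (2 := fun x => eq_sym (v0_step m x)).
    repeat apply decr_concave_plus.
    + exact decr_concave_neg_cost.
    + apply decr_concave_scal; [lra | exact Hadm].
    + apply decr_concave_scal; [lra | apply decr_concave_shift_down, IH].
    + exact Hserv.
Qed.

Lemma Delta0_nondecreasing (n k l : nat) :
  (k <= l)%nat -> Delta0 lam mul muh Rw c h n k <= Delta0 lam mul muh Rw c h n l.
Proof.
  unfold Delta0, v. induction 1; [lra|].
  pose proof (decr_concave_v0 n m). unfold V in *. lra.
Qed.

End ValueFunctions.

Lemma ext_le_trans (a b d : ext) : ext_le a b -> ext_le b d -> ext_le a d.
Proof. destruct a, b, d; simpl; intros; lia || tauto. Qed.

Lemma ext_le_add1 (a b : ext) : ext_le a b -> ext_le (ext_add1 a) (ext_add1 b).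
Proof. destruct a, b; simpl; intros; lia || tauto. Qed.

Lemma ext_le_self_add1 (a : ext) : ext_le a (ext_add1 a).
Proof. destruct a; simpl; lia || tauto. Qed.

Lemma ext_le_succ_add1 (x : nat) (T : ext) :
  ext_le (ext_of_nat (S x)) (ext_add1 T) <-> ext_le (ext_of_nat x) T.
Proof. destruct T; simpl; lia || tauto. Qed.

Lemma ext_le_zero_add1 (T : ext) :
  ext_le (Fin (-1)) T -> ext_le (ext_of_nat 0) (ext_add1 T).
Proof. destruct T; simpl; lia || tauto. Qed.

Lemma threshold_spec (f : nat -> R) (th : R) (T : ext) :
  (forall k l, (k <= l)%nat -> f k <= f l) ->
  is_threshold f th T -> forall x, ext_le (ext_of_nat x) T <-> f x <= th.
Proof.
  intros Hmono [Hbot [Hub Hleast]] x. split; [|apply Hub].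
  intro Hx. destruct (Rle_dec (f x) th) as [Hle|Hgt]; [exact Hle|exfalso].
  (* otherwise x - 1 would be a smaller upper bound of the sublevel set *)
  assert (HU : ext_le T (Fin (Z.of_nat x - 1))).
  { apply Hleast; simpl; [lia|].
    intros k Hk. destruct (le_lt_dec x k) as [Hxk|Hxk]; [|lia].
    pose proof (Hmono _ _ Hxk). lra. }
  destruct T; simpl in *; lia.
Qed.

Lemma threshold_mono (f : nat -> R) (th1 th2 : R) (T1 T2 : ext) :
  th1 <= th2 -> is_threshold f th1 T1 -> is_threshold f th2 T2 -> ext_le T1 T2.
Proof.
  intros Hth [_ [_ Hleast]] [Hbot [Hub _]].
  apply Hleast; [exact Hbot|]. intros k Hk. apply Hub. lra.
Qed.

Section Decisions.

Variables (lam mul muh Rw c : R) (h : nat -> R) (n : nat).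

Let f := Delta0 lam mul muh Rw c h n.

Lemma adm_true (x : nat) : f x <= Rw -> adm lam mul muh Rw c h n x = true.
Proof. unfold adm. fold f. destruct (Rle_dec (f x) Rw); tauto. Qed.

Lemma adm_false (x : nat) : ~ f x <= Rw -> adm lam mul muh Rw c h n x = false.
Proof. unfold adm. fold f. destruct (Rle_dec (f x) Rw); tauto. Qed.

Lemma serv_low (x : nat) :
  f x <= c / (muh - mul) -> serv lam mul muh Rw c h n (S x) = low.
Proof. unfold serv. fold f. destruct (Rle_dec (f x) (c / (muh - mul))); tauto. Qed.

Lemma serv_high (x : nat) :
  ~ f x <= c / (muh - mul) -> serv lam mul muh Rw c h n (S x) = high.
Proof. unfold serv. fold f. destruct (Rle_dec (f x) (c / (muh - mul))); tauto. Qed.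

End Decisions.

Theorem proposition1
  (lam mul muh beta Rw c : R) (h : nat -> R)
  (Hlam : 0 < lam) (Hmul : 0 < mul) (Hmulh : mul < muh)
  (Hbeta : 0 < beta) (Hnorm : lam + muh + beta = 1)
  (HR : 0 <= Rw) (Hc : 0 < c)
  (Hh0 : h O = 0)
  (Hhmono : forall x : nat, h x <= h (S x))
  (Hhconv : forall x : nat, h (S x) - h x <= h (S (S x)) - h (S x))
  (HRc : Rw <= c / (muh - mul)) :
  forall (n : nat), (1 <= n)%nat ->
  forall Ts Bd : ext,
    is_threshold (Delta0 lam mul muh Rw c h n) (c / (muh - mul)) Ts ->
    is_threshold (Delta0 lam mul muh Rw c h n) Rw Bd ->
    let Bs := ext_add1 Ts in
    ext_le (ext_add1 Bd) Bs /\
    (forall x : nat,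
       (ext_le (ext_of_nat x) Bd ->
          serv lam mul muh Rw c h n x = low /\ adm lam mul muh Rw c h n x = true) /\
       (~ ext_le (ext_of_nat x) Bd -> ext_le (ext_of_nat x) Bs ->
          serv lam mul muh Rw c h n x = low /\ adm lam mul muh Rw c h n x = false) /\
       (~ ext_le (ext_of_nat x) Bs ->
          serv lam mul muh Rw c h n x = high /\ adm lam mul muh Rw c h n x = false)).
Proof.
  intros n _ Ts Bd HTs HBd Bs.
  pose proof (Delta0_nondecreasing lam mul muh Rw c h Hlam Hmul Hmulh Hc
                Hh0 Hhmono Hhconv n) as Hmono.
  pose proof (threshold_spec _ _ _ Hmono HTs) as Ts_spec.
  pose proof (threshold_spec _ _ _ Hmono HBd) as Bd_spec.
  assert (HBdTs : ext_le Bd Ts) by exact (threshold_mono _ _ _ _ _ HRc HBd HTs).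
  assert (Hzero : ext_le (ext_of_nat 0) Bs) by apply ext_le_zero_add1, HTs.
  split; [apply ext_le_add1, HBdTs|]. intro x. split; [|split].
  - (* x <= Bd: Delta(x-1) <= Delta(x) <= R <= c/delta *)
    intro Hx. split; [|apply adm_true, Bd_spec, Hx].
    destruct x as [|x]; [reflexivity|]. apply serv_low.
    pose proof (Hmono x (S x) (le_S _ _ (le_n _))). apply Bd_spec in Hx. lra.
  - intros Hx HxBs. split; [|rewrite Bd_spec in Hx; apply adm_false, Hx].
    destruct x as [|x]; [reflexivity|].
    apply serv_low, Ts_spec, ext_le_succ_add1, HxBs.
  - (* x > Bs >= Bd, and x = y + 1 with y > Ts *)
    intro Hx. destruct x as [|x]; [contradiction|]. split.
    + apply serv_high. rewrite <- Ts_spec, <- ext_le_succ_add1. exact Hx.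
    + apply adm_false. rewrite <- Bd_spec. intro HxBd. apply Hx.
      apply ext_le_trans with Bd; [exact HxBd|].
      apply ext_le_trans with Ts; [exact HBdTs | apply ext_le_self_add1].
Qed.
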